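(* Let $h$ be a linear functional and $\lambda\in\mathbb R$ such that $\operatorname{conv}(\frac12(d+\mathcal W))$ lies in the open half-space $\{\bar x:h(\bar x)<\lambda\}$. Then there is at most one element of $\mathcal C$ in $\{\bar x:h(\bar x)>\lambda\}$, and such an element is a null vertex of $\operatorname{conv}(\mathcal C)$. Consequently any element of $\mathcal C$ outside $\operatorname{conv}(\frac12(d+\mathcal W))$ is a null vertex of $\operatorname{conv}(\mathcal C)$.
   Context: Setting: $G$ compact Lie group, $K\subset G$ closed, $G/K$ connected almost effective, isotropy representation $\mathfrak p=\mathfrak p_1\oplus\cdots\oplus\mathfrak p_r$ ($r\ge2$) with pairwise inequivalent $\mathbb R$-irreducible summands, $d_i=\dim\mathfrak p_i$, $d=(d_1,\dots,d_r)$, $n=\sum d_i$. The scalar curvature of the metric $e^{q_i}Q$ on $\mathfrak p_i$ is $S(q)=\sum_{w\in\mathcal W}A_we^{w\cdot q}$, $\mathcal W\subset\mathbb Z^r$ finite, $A_w\ne0$, each $w$ of type I (one entry $-1$), type II (one entry $1$, two entries $-1$) or type III (one entry $1$, one entry $-2$), other entries $0$; $A_w>0$ for type I and $<0$ otherwise. Assume $\dim\operatorname{conv}(\mathcal W)=r-1$. $J$ is the symmetric bilinear form on $\mathbb R^r$ with $J(p,p)=\frac1{n-1}(\sum p_i)^2-\sum p_i^2/d_i$; a vector $\bar x$ is null if $J(\bar x,\bar x)=0$. $u=\sum_{\bar c\in\mathcal C}F_{\bar c}e^{\bar c\cdot q}$ ($\mathcal C$ finite, $F_{\bar c}\ne0$)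 is a superpotential: for every $\xi$, $\sum_{(\bar a,\bar c)\in\mathcal C^2,\ \bar a+\bar c=\xi}J(\bar a,\bar c)F_{\bar a}F_{\bar c}$ equals $A_w$ if $\xi=d+w$, $w\in\mathcal W$, and $0$ otherwise. Normalise (by subtracting a constant from $u$) so that $\mathcal C$ lies in the hyperplane $\mathcal H=\{\bar x:\sum\bar x_i=\frac12(n-1)\}$, which also contains $\frac12(d+\mathcal W)$. *)

From HB Require Import structures.
From mathcomp Require Import all_boot all_order all_algebra.
Set Implicit Arguments. Unset Strict Implicit. Unset Printing Implicit Defensive.
Import Order.TTheory GRing.Theory Num.Theory.
Local Open Scope ring_scope.

Section Defs.
Variables (R : realFieldType) (r : nat).
Implicit Types (x y w : 'rV[R]_r) (S : seq 'rV[R]_r).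

Definition dvec (d : 'I_r -> nat) : 'rV[R]_r := \row_i (d i)%:R.

Definition ndim (d : 'I_r -> nat) : nat := (\sum_i d i)%N.

Definition csum x : R := \sum_i x 0 i.

Definition Jform (d : 'I_r -> nat) x y : R :=
  csum x * csum y / ((ndim d)%:R - 1) - \sum_i x 0 i * y 0 i / (d i)%:R.

Definition is_null (d : 'I_r -> nat) x : Prop := Jform d x x = 0.

Definition lin (hv : 'rV[R]_r) x : R := \sum_i hv 0 i * x 0 i.

Definition in_conv S x : Prop :=
  exists mu : 'rV[R]_r -> R, (forall y, 0 <= mu y) /\
    \sum_(y <- S) mu y = 1 /\ x = \sum_(y <- S) mu y *: y.

Definition is_vertex S x : Prop :=
  in_conv S x /\
  forall y z (t : R), in_conv S y -> in_conv S z -> 0 < t < 1 ->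
    x = t *: y + (1 - t) *: z -> y = x /\ z = x.

Definition typeI w : Prop :=
  exists i, w 0 i = -1 /\ forall j, j != i -> w 0 j = 0.
Definition typeII w : Prop :=
  exists i j k, [/\ i != j, i != k & j != k] /\
    [/\ w 0 i = 1, w 0 j = -1 & w 0 k = -1] /\
    forall l, l != i -> l != j -> l != k -> w 0 l = 0.
Definition typeIII w : Prop :=
  exists i j, i != j /\ w 0 i = 1 /\ w 0 j = -2 /\
    forall l, l != i -> l != j -> w 0 l = 0.

Definition conv_dim S (k : nat) : Prop :=
  S != [::] /\ \rank (\matrix_(i < size S, j < r) (S`_i - S`_0) 0 j) = k.

Definition halfDW (d : 'I_r -> nat) S : seq 'rV[R]_r :=
  [seq 2^-1 *: (dvec d + w) | w <- S].

End Defs.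

From HB Require Import structures.
From mathcomp Require Import all_boot all_order all_algebra.
From mathcomp.algebra_tactics Require Import ring lra.
Import Order.TTheory GRing.Theory Num.Theory.
Local Open Scope ring_scope.
Set Implicit Arguments. Unset Strict Implicit. Unset Printing Implicit Defensive.

(* Order R^r lexicographically, first by [h] and then by the coordinates; this
   is a total order compatible with addition.  If [c1] is the top element of [C]
   and [h c1 > lam], the only way to write [2 c1] as a sum of two elements of [C]
   is [c1 + c1], so the coefficient of [e^(2 c1.q)] in [J(u, u)] is
   [J(c1, c1) F(c1)^2]; the superpotential equation makes it vanish because [c1]
   lies beyond [conv(1/2 (d + W))].  Hence [c1] is null.  For a second element [c2]
   beyond [lam] (the top of [C] minus [c1]) the same counting at [c1 + c2] and
   [2 c2] gives [J(c1, c2) = J(c2, c2) = 0], and since [J] is negative definite on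
   the hyperplane [sum x_i = 0] this forces [c1 = c2].  The element beyond [lam]
   then strictly maximises [h] on [C], so it is a vertex of [conv C].  A point
   outside [conv(1/2 (d + W))] is separated from it by a linear functional, which
   over an ordered field comes from Gordan's alternative, proved by
   Fourier-Motzkin elimination. *)

Lemma big_seq_single (V : nmodType) (T : eqType) (S : seq T) (f : T -> V) c :
  uniq S -> c \in S -> (forall a, a \in S -> a != c -> f a = 0) ->
  \sum_(a <- S) f a = f c.
Proof.
move=> uS cS f0; rewrite (bigD1_seq c) //= big1_seq ?addr0 // => a /andP[ac aS].
exact: f0.
Qed.

Lemma big_seq_pair (V : nmodType) (T : eqType) (S : seq T) (f : T -> V) c c' :
  uniq S -> c \in S -> c' \in S -> c != c' ->
  (forall a, a \in S -> a != c -> a != c' -> f a = 0) ->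
  \sum_(a <- S) f a = f c + f c'.
Proof.
move=> uS cS c'S cc' f0; rewrite (bigD1_seq c) //= -big_filter.
rewrite (big_seq_single (c := c')) ?filter_uniq ?mem_filter 1?eq_sym ?cc' ?c'S //.
by move=> a; rewrite mem_filter => /andP[ac aS]; apply: f0.
Qed.

Lemma big_seq_pred1 (V : nmodType) (T : eqType) (S : seq T) (f : T -> V) c :
  uniq S -> \sum_(a <- S | a == c) f a = if c \in S then f c else 0.
Proof.
move=> uS; case: ifP => cS; last by rewrite big1_seq // => a /andP[/eqP-> ]; rewrite cS.
by rewrite -big_filter filter_pred1_uniq // big_seq1.
Qed.

Section LinearFunctionals.
Variables (R : realFieldType) (r : nat).
Implicit Types (x y hv g : 'rV[R]_r).

Lemma linD hv x y : lin hv (x + y) = lin hv x + lin hv y.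
Proof. by rewrite /lin -big_split; apply: eq_bigr => i _; rewrite mxE mulrDr. Qed.

Lemma linZ hv a x : lin hv (a *: x) = a * lin hv x.
Proof. by rewrite /lin mulr_sumr; apply: eq_bigr => i _; rewrite mxE mulrCA. Qed.

Lemma lin0 hv : lin hv 0 = 0.
Proof. by rewrite /lin big1 // => i _; rewrite mxE mulr0. Qed.

Lemma linN hv x : lin hv (- x) = - lin hv x.
Proof. by rewrite -scaleN1r linZ mulN1r. Qed.

Lemma linB hv x y : lin hv (x - y) = lin hv x - lin hv y.
Proof. by rewrite linD linN. Qed.

Lemma lin_sum I (s : seq I) (F : I -> 'rV[R]_r) hv :
  lin hv (\sum_(i <- s) F i) = \sum_(i <- s) lin hv (F i).
Proof.
by elim/big_rec2: _ => [|i y1 y2 _ <-]; rewrite ?lin0 ?linD.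
Qed.

Lemma linDl g hv x : lin (g + hv) x = lin g x + lin hv x.
Proof. by rewrite /lin -big_split; apply: eq_bigr => i _; rewrite mxE mulrDl. Qed.

Lemma linZl a hv x : lin (a *: hv) x = a * lin hv x.
Proof. by rewrite /lin mulr_sumr; apply: eq_bigr => i _; rewrite mxE mulrA. Qed.

Lemma linNl hv x : lin (- hv) x = - lin hv x.
Proof. by rewrite -scaleN1r linZl mulN1r. Qed.

Lemma linBl g hv x : lin (g - hv) x = lin g x - lin hv x.
Proof. by rewrite linDl linNl. Qed.

Lemma lin_opp_self_lt0 x : x != 0 -> lin (- x) x < 0.
Proof.
have sq_ge0 (a : R) : 0 <= a * a by rewrite -expr2 sqr_ge0.
move=> x0; rewrite linNl oppr_lt0 lt_def sumr_ge0 ?andbT => [|i _]; last exact: sq_ge0.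
apply: contra x0 => /eqP/psumr_eq0P x2_eq0; apply/eqP/rowP => i.
by have /eqP := x2_eq0 (fun j _ => sq_ge0 _) i isT; rewrite mulf_eq0 orbb mxE => /eqP.
Qed.

End LinearFunctionals.

Section Gordan.
Variables (R : realFieldType) (r : nat).
Implicit Types (L : seq 'rV[R]_r) (u v h g : 'rV[R]_r).

Definition negative_on L h := forall v, v \in L -> lin h v < 0.

Definition pos_dependence L (mu : nat -> R) :=
  [/\ forall i, 0 <= mu i, \sum_(0 <= i < size L) mu i *: L`_i = 0
    & 0 < \sum_(0 <= i < size L) mu i].

(* Fourier-Motzkin step: the combination of [u] and [v] on which [h] vanishes. *)
Definition eliminate h v u := lin h v *: u - lin h u *: v.

Lemma exists_dominating_scale (T : eqType) (s : seq T) (f g : T -> R) :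
  (forall t, t \in s -> 0 < g t) -> exists K, forall t, t \in s -> f t < K * g t.
Proof.
elim: s => [|a s IH] g_gt0; first by exists 0.
have [K fK] : exists K, forall t, t \in s -> f t < K * g t.
  by apply: IH => t ts; apply: g_gt0; rewrite inE ts orbT.
have ga := g_gt0 a (mem_head a s).
exists (Num.max K (f a / g a + 1)) => t; rewrite inE => /predU1P[->|ts].
  have le_K : f a / g a + 1 <= Num.max K (f a / g a + 1) by rewrite le_max lexx orbT.
  apply: lt_le_trans (ler_wpM2r (ltW ga) le_K).
  by rewrite mulrDl divfK ?gt_eqF // mul1r ltrDl.
have le_K : K <= Num.max K (f a / g a + 1) by rewrite le_max lexx.
by apply: lt_le_trans (fK t ts) (ler_wpM2r (ltW (g_gt0 t _)) le_K); rewrite inE ts orbT.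
Qed.

Lemma pos_dependence_cons L v mu :
  pos_dependence L mu -> pos_dependence (v :: L) (fun i => if i is j.+1 then mu j else 0).
Proof.
case=> mu_ge0 mu_comb mu_gt0.
by split=> [[|i]//||]; rewrite /= big_nat_recl //= ?scale0r add0r.
Qed.

Lemma pos_dependence_zero L : pos_dependence (0 :: L) (fun i => (i == 0%N)%:R).
Proof.
split=> [i||]; rewrite ?ler0n // /= big_nat_recl //= big1 ?addr0 ?ltr01 ?scaler0 //.
by move=> i _; rewrite scale0r.
Qed.

Lemma negative_on_cons_kernel L v h : v != 0 -> negative_on L h -> lin h v = 0 ->
  exists h', negative_on (v :: L) h'.
Proof.
move=> v0 hL hv0.
have [K fK] : exists K, forall u, u \in L -> lin (- v) u < K * - lin h u.
  by apply: exists_dominating_scale => u uL; rewrite oppr_gt0 hL.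
exists (K *: h - v) => u; rewrite inE => /predU1P[->|uL].
  by rewrite linBl linZl hv0 mulr0 sub0r -linNl lin_opp_self_lt0.
by have := fK u uL; rewrite linBl linZl linNl mulrN; lra.
Qed.

Lemma negative_on_cons_eliminate L v h g : negative_on L h -> 0 < lin h v ->
  negative_on (map (eliminate h v) L) g -> exists h', negative_on (v :: L) h'.
Proof.
move=> hL hv_gt0 gE.
set psi := lin h v *: g - lin g v *: h.
have psiL u : u \in L -> lin psi u < 0.
  move=> uL; have := gE _ (map_f (eliminate h v) uL).
  by rewrite /eliminate linB !linZ linBl !linZl mulrC [lin h u * _]mulrC.
have [K fK] : exists K, forall u, u \in L -> - lin h u < K * - lin psi u.
  by apply: exists_dominating_scale => u uL; rewrite oppr_gt0 psiL.
exists (K *: psi - h) => u; rewrite inE => /predU1P[->|uL].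
  by rewrite linBl linZl linBl !linZl [lin g v * _]mulrC subrr mulr0 sub0r oppr_lt0.
by rewrite linBl linZl; have := fK u uL; rewrite mulrN; lra.
Qed.

Lemma pos_dependence_cons_eliminate L v h mu : negative_on L h -> 0 <= lin h v ->
  pos_dependence (map (eliminate h v) L) mu -> exists nu, pos_dependence (v :: L) nu.
Proof.
move=> hL hv_ge0 [mu_ge0 mu_comb mu_gt0]; rewrite size_map in mu_comb mu_gt0.
have hL_nth j : (j < size L)%N -> 0 < - lin h L`_j.
  by move=> jL; rewrite oppr_gt0 hL ?mem_nth.
have term_ge0 j : 0 <= mu j * - lin h L`_j.
  have [jL|jL] := ltnP j (size L); first by rewrite mulr_ge0 // ltW // hL_nth.
  by rewrite nth_default // lin0 oppr0 mulr0.
set m0 := \sum_(0 <= j < size L) mu j * - lin h L`_j.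
have m0_gt0 : 0 < m0.
  rewrite lt_def psumr_neq0 // sumr_ge0 // andbT.
  move: mu_gt0; rewrite lt_def psumr_neq0 // => /andP[/hasP[j + mu_j] _].
  rewrite mem_index_iota => jL.
  by apply/hasP; exists j; rewrite ?mem_index_iota // mulr_gt0 // hL_nth.
exists (fun i => if i is j.+1 then lin h v * mu j else m0); split.
- case=> [|i]; [exact: ltW | exact: mulr_ge0].
- rewrite /= big_nat_recl //= -[RHS]mu_comb [RHS](eq_big_nat _ _ (F2 := fun i =>
    (lin h v * mu i) *: L`_i + (mu i * - lin h L`_i) *: v)) => [|i /andP[_ iL]].
    by rewrite big_split -scaler_suml addrC.
  by rewrite (nth_map 0) // scalerBr !scalerA mulrC -scaleNr mulrN.
- by rewrite /= big_nat_recl //= -mulr_sumr ltr_pwDl // mulr_ge0 // sumr_ge0.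
Qed.

Theorem gordan L : (exists h, negative_on L h) \/ (exists mu, pos_dependence L mu).
Proof.
elim: {L}(size L) {-2}L (erefl (size L)) => [|n IH] [|v L] //= => [_|[sL]].
  by left; exists 0 => v; rewrite in_nil.
have [[h hL]|[mu muL]] := IH L sL; last by right; eexists; apply: pos_dependence_cons muL.
case: (ltrgtP (lin h v) 0) => [hv_lt0|hv_gt0|hv0].
- by left; exists h => u; rewrite inE => /predU1P[->//|]; apply: hL.
- have [[g gE]|[mu muE]] := IH (map (eliminate h v) L) (etrans (size_map _ _) sL).
    by left; apply: negative_on_cons_eliminate gE.
  by right; apply: pos_dependence_cons_eliminate hL (ltW hv_gt0) muE.
- have [->|v0] := eqVneq v 0; first by right; eexists; apply: pos_dependence_zero.
  by left; apply: negative_on_cons_kernel v0 hL hv0.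
Qed.

End Gordan.

Section Separation.
Variables (R : realFieldType) (r : nat).
Implicit Types (S : seq 'rV[R]_r) (x y hv : 'rV[R]_r).

Lemma in_conv_mem S y : uniq S -> y \in S -> in_conv S y.
Proof.
move=> uS yS; exists (fun z => (z == y)%:R); split=> [z|]; first by rewrite ler0n.
by split; rewrite (big_seq_single (c := y)) ?eqxx ?scale1r // => z _ /negbTE->;
  rewrite ?scale0r.
Qed.

Lemma in_conv_lin_le S hv m y :
  (forall z, z \in S -> lin hv z <= m) -> in_conv S y -> lin hv y <= m.
Proof.
move=> le_m [mu [mu_ge0 [mu1 ->]]].
rewrite lin_sum -[m]mul1r -mu1 mulr_suml big_seq [X in _ <= X]big_seq.
by apply: ler_sum => z zS; rewrite linZ ler_wpM2l ?le_m.
Qed.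

Lemma pos_dependence_in_conv S x mu :
  uniq S -> pos_dependence [seq y - x | y <- S] mu -> in_conv S x.
Proof.
move=> uS [mu_ge0 mu_comb mu_gt0]; rewrite size_map in mu_comb mu_gt0.
set M := \sum_(0 <= i < size S) mu i in mu_gt0.
exists (fun z => if z \in S then mu (index z S) / M else 0); split.
  by move=> z; case: ifP => // _; rewrite divr_ge0 // ltW.
have weightsE (G : 'rV[R]_r -> 'rV[R]_r) :
    \sum_(z <- S) (if z \in S then mu (index z S) / M else 0) *: G z =
    \sum_(0 <= i < size S) (mu i / M) *: G S`_i.
  by rewrite (big_nth 0); apply: eq_big_nat => i /andP[_ iS]; rewrite mem_nth // index_uniq.
split.
  rewrite (big_nth 0) (eq_big_nat _ _ (F2 := fun i => mu i / M)) => [|i /andP[_ iS]].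
    by rewrite -mulr_suml divff ?gt_eqF.
  by rewrite mem_nth // index_uniq.
rewrite weightsE; apply: (@scalerI _ _ M); first by rewrite gt_eqF.
rewrite scaler_sumr (eq_bigr (fun i => mu i *: S`_i)) => [|i _]; last first.
  by rewrite scalerA mulrC divfK ?gt_eqF.
apply/esym/eqP; rewrite -subr_eq0 -[X in _ == X]mu_comb /M scaler_suml -sumrB.
by apply/eqP/eq_big_nat => i /andP[_ iS]; rewrite (nth_map 0) // scalerBr.
Qed.

Lemma separate_from_conv S x : uniq S -> ~ in_conv S x ->
  exists hv lam, (forall y, in_conv S y -> lin hv y < lam) /\ lam < lin hv x.
Proof.
move=> uS xS; have [[h hS]|[mu muS]] := gordan [seq y - x | y <- S]; last first.
  by case: xS; apply: pos_dependence_in_conv muS.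
have lt_x y : y \in S -> lin h y < lin h x.
  by move=> yS; rewrite -subr_lt0 -linB; apply: hS; apply: map_f.
set m := \big[Num.max/lin h x - 1]_(y <- S) lin h y.
have m_lt : m < lin h x.
  rewrite /m big_seq; elim/big_ind: _ => [|a b ? ?|y /lt_x //].
    by rewrite gtrBl ltr01.
  by rewrite gt_max; apply/andP.
exists h, ((m + lin h x) / 2); split=> [y y_conv|]; last by lra.
suff : lin h y <= m by lra.
by apply: in_conv_lin_le y_conv => z zS; apply: le_bigmax_seq.
Qed.

End Separation.

Section LexOrder.
Variables (R : realFieldType) (r : nat).
Implicit Types (fs : seq 'rV[R]_r) (L : seq 'rV[R]_r) (a b c e f m hv : 'rV[R]_r).

Fixpoint lex_lt fs a b : bool :=
  if fs is f :: fs' then (lin f a < lin f b) || (lin f a == lin f b) && lex_lt fs' a b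
  else false.

Definition lex_le fs a b := (a == b) || lex_lt fs a b.

Lemma lex_lt_irr fs a : lex_lt fs a a = false.
Proof. by elim: fs => //= f fs ->; rewrite ltxx eqxx. Qed.

Lemma lex_lt_trans fs a b c : lex_lt fs a b -> lex_lt fs b c -> lex_lt fs a c.
Proof.
elim: fs => //= f fs IH /orP[ab|/andP[/eqP ab ab']] /orP[bc|/andP[/eqP bc bc']].
- by rewrite (lt_trans ab bc).
- by rewrite -bc ab.
- by rewrite ab bc.
- by rewrite ab bc eqxx IH ?orbT.
Qed.

Lemma lex_lt_le_add fs a b c e : lex_lt fs a b -> lex_le fs c e -> lex_lt fs (a + c) (b + e).
Proof.
move=> ab /orP[/eqP<-|]; elim: fs ab => //= f fs IH.
  by rewrite !linD ltrD2r (inj_eq (addIr _)) => /orP[->//|/andP[-> /IH->]]; rewrite orbT.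
move=> /orP[ab|/andP[/eqP ab ab']] /orP[ce|/andP[/eqP ce ce']]; rewrite !linD.
- by rewrite ltrD.
- by rewrite ce ltrD2r ab.
- by rewrite ab ltrD2l ce.
- by rewrite ab ce ltxx eqxx IH.
Qed.

Lemma lex_lt_add_neq fs a b c e : lex_lt fs a b -> lex_le fs c e -> a + c != b + e.
Proof. by move=> ab ce; apply: contraTneq (lex_lt_le_add ab ce) => ->; rewrite lex_lt_irr. Qed.

Lemma lex_lt_head f fs a b : lex_lt (f :: fs) a b -> lin f a <= lin f b.
Proof. by move=> /orP[/ltW //|/andP[/eqP-> _]]. Qed.

Lemma lin_delta i a : lin (delta_mx 0 i) a = a 0 i.
Proof.
rewrite /lin (bigD1 i) //= big1 ?addr0 => [|j ji]; first by rewrite mxE !eqxx mul1r.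
by rewrite mxE (negbTE ji) andbF mul0r.
Qed.

Definition lex_key hv : seq 'rV[R]_r := hv :: [seq delta_mx 0 i | i <- enum 'I_r].

Lemma lex_lt_total fs a b :
  [|| lex_lt fs a b, lex_lt fs b a | all (fun f => lin f a == lin f b) fs].
Proof.
elim: fs => //= f fs IH.
by case: (ltgtP (lin f a) (lin f b)) => //= ->; rewrite eqxx.
Qed.

Lemma lex_key_total hv a b : a != b -> lex_lt (lex_key hv) a b || lex_lt (lex_key hv) b a.
Proof.
move=> ab; case/or3P: (lex_lt_total (lex_key hv) a b) => [->|->|/allP lin_eq].
- by [].
- by rewrite orbT.
case/eqP: ab; apply/rowP => i; rewrite -!lin_delta; apply/eqP/lin_eq.
by rewrite inE map_f ?orbT ?mem_enum.
Qed.

Definition lex_max fs L m := m \in L /\ forall a, a \in L -> a != m -> lex_lt fs a m.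

Lemma lex_max_exists fs L : (forall a b, a != b -> lex_lt fs a b || lex_lt fs b a) ->
  L != [::] -> exists m, lex_max fs L m.
Proof.
move=> total; elim: L => [//|a L IH] _.
have [->|L_neq0] := eqVneq L [::].
  by exists a; split=> [|b]; rewrite ?inE // => /eqP->; rewrite eqxx.
have [m [mL m_max]] := IH L_neq0.
have [b_lt|m_lt] : lex_le fs a m \/ lex_lt fs m a.
- by rewrite /lex_le; case: eqVneq => [->|/total/orP[]]; [left|left|right].
- exists m; split=> [|b]; first by rewrite inE mL orbT.
  rewrite inE => /predU1P[->|bL bm]; last exact: m_max.
  by move: b_lt; rewrite /lex_le => /orP[/eqP->|]; [rewrite eqxx|].
- exists a; split=> [|b]; first exact: mem_head.
  rewrite inE => /predU1P[->|bL ba]; first by rewrite eqxx.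
  have [->//|bm] := eqVneq b m; exact: lex_lt_trans (m_max b bL bm) m_lt.
Qed.

Lemma lex_max_le fs L m a : lex_max fs L m -> a \in L -> lex_le fs a m.
Proof. by case=> _ m_max aL; rewrite /lex_le; case: eqVneq => //= am; apply: m_max. Qed.

Lemma lex_max_lin f fs L m a : lex_max (f :: fs) L m -> a \in L -> lin f a <= lin f m.
Proof. by move=> mx /(lex_max_le mx)/orP[/eqP->//|/lex_lt_head]. Qed.

End LexOrder.

Section QuadraticForm.
Variables (R : realFieldType) (r : nat) (d : 'I_r -> nat).
Implicit Types (x y z : 'rV[R]_r).

Lemma csumD x y : csum (x + y) = csum x + csum y.
Proof. by rewrite /csum -big_split; apply: eq_bigr => i _; rewrite mxE. Qed.

Lemma csumN x : csum (- x) = - csum x.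
Proof. by rewrite /csum -sumrN; apply: eq_bigr => i _; rewrite mxE. Qed.

Lemma JformC x y : Jform d x y = Jform d y x.
Proof.
rewrite /Jform [csum x * _]mulrC; congr (_ - _).
by apply: eq_bigr => i _; rewrite [x 0 i * _]mulrC.
Qed.

Lemma JformDr x y z : Jform d x (y + z) = Jform d x y + Jform d x z.
Proof.
rewrite /Jform csumD (eq_bigr (fun i => x 0 i * y 0 i / (d i)%:R + x 0 i * z 0 i / (d i)%:R)).
  by rewrite big_split /=; ring.
by move=> i _; rewrite mxE; ring.
Qed.

Lemma JformNr x y : Jform d x (- y) = - Jform d x y.
Proof.
rewrite /Jform csumN (eq_bigr (fun i => - (x 0 i * y 0 i / (d i)%:R))).
  by rewrite sumrN; ring.
by move=> i _; rewrite mxE; ring.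
Qed.

Lemma JformBr x y z : Jform d x (y - z) = Jform d x y - Jform d x z.
Proof. by rewrite JformDr JformNr. Qed.

Lemma JformBl x y z : Jform d (x - y) z = Jform d x z - Jform d y z.
Proof. by rewrite JformC JformBr !(JformC z). Qed.

Hypothesis d_gt0 : forall i, (0 < d i)%N.

Lemma Jform_csum0_eq0 x : csum x = 0 -> Jform d x x = 0 -> x = 0.
Proof.
have term_ge0 i : 0 <= x 0 i * x 0 i / (d i)%:R by rewrite divr_ge0 // -expr2 sqr_ge0.
rewrite /Jform => -> /eqP; rewrite mul0r mul0r sub0r oppr_eq0 => /eqP/psumr_eq0P x2_eq0.
apply/rowP => i; have /eqP := x2_eq0 (fun j _ => term_ge0 j) i isT.
rewrite mxE mulf_eq0 invr_eq0 pnatr_eq0 (negbTE (lt0n_neq0 (d_gt0 i))) orbF.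
by rewrite mulf_eq0 orbb => /eqP.
Qed.

Lemma null_orthogonal_eq x y : csum x = csum y ->
  is_null d x -> is_null d y -> Jform d x y = 0 -> x = y.
Proof.
move=> sxy nx ny xy; apply/eqP; rewrite -subr_eq0; apply/eqP/Jform_csum0_eq0.
  by rewrite csumD csumN sxy subrr.
by rewrite JformBl !JformBr nx ny xy (JformC y) xy !subrr.
Qed.

End QuadraticForm.

Section Vertices.
Variables (R : realFieldType) (r : nat) (C : seq 'rV[R]_r) (hv c : 'rV[R]_r).
Hypotheses (uniqC : uniq C) (cC : c \in C)
  (c_max : forall a, a \in C -> a != c -> lin hv a < lin hv c).

Lemma in_conv_lin_le_max y : in_conv C y -> lin hv y <= lin hv c.
Proof.
apply: in_conv_lin_le => a aC.
by have [->//|ac] := eqVneq a c; apply/ltW/c_max.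
Qed.

Lemma in_conv_lin_eq_max y : in_conv C y -> lin hv y = lin hv c -> y = c.
Proof.
move=> [mu [mu_ge0 [mu1 ->]]] /esym/eqP; rewrite -subr_eq0.
have gap_ge0 a : a \in C -> 0 <= mu a * (lin hv c - lin hv a).
  move=> aC; rewrite mulr_ge0 // subr_ge0.
  by have [->//|ac] := eqVneq a c; rewrite ltW // c_max.
have -> : lin hv c - lin hv (\sum_(a <- C) mu a *: a) =
    \sum_(a <- C) mu a * (lin hv c - lin hv a).
  rewrite lin_sum -[lin hv c in LHS]mul1r -mu1 mulr_suml -sumrB.
  by apply: eq_bigr => a _; rewrite linZ; ring.
rewrite big_seq psumr_eq0 // => /allP mu_eq0.
have mu_a a : a \in C -> a != c -> mu a = 0.
  move=> aC ac; have /implyP/(_ aC) := mu_eq0 a aC.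
  by rewrite mulf_eq0 subr_eq0 (gt_eqF (c_max aC ac)) orbF => /eqP.
have mu_c : mu c = 1 by rewrite -mu1 (big_seq_single (c := c)).
by rewrite (big_seq_single (c := c)) ?mu_c ?scale1r // => a aC ac; rewrite mu_a ?scale0r.
Qed.

Lemma strict_max_is_vertex : is_vertex C c.
Proof.
split=> [|y z t y_conv z_conv /andP[t_gt0 t_lt1] c_eq]; first exact: in_conv_mem.
have le_y := in_conv_lin_le_max y_conv; have le_z := in_conv_lin_le_max z_conv.
have hc : lin hv c = t * lin hv y + (1 - t) * lin hv z by rewrite {1}c_eq linD !linZ.
by split; [apply: in_conv_lin_eq_max y_conv _ | apply: in_conv_lin_eq_max z_conv _]; nra.
Qed.

End Vertices.

Section Superpotential.
Variables (R : realFieldType) (r : nat) (d : 'I_r -> nat) (W : seq 'rV[R]_r)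
  (A : 'rV[R]_r -> R) (C : seq 'rV[R]_r) (F : 'rV[R]_r -> R).
Hypotheses (d_gt0 : forall i, (0 < d i)%N) (uniqW : uniq W) (uniqC : uniq C)
  (F_neq0 : forall c, c \in C -> F c != 0)
  (superpotential : forall xi : 'rV[R]_r,
     \sum_(a <- C) \sum_(c <- C | a + c == xi) Jform d a c * F a * F c =
     (if xi - dvec R d \in W then A (xi - dvec R d) else 0))
  (C_hyperplane : forall c, c \in C -> csum c = ((ndim d)%:R - 1) / 2).
Variables (hv : 'rV[R]_r) (lam : R).
Hypothesis halfDW_lt : forall x, in_conv (halfDW d W) x -> lin hv x < lam.

Lemma halfDW_uniq : uniq (halfDW d W).
Proof.
rewrite map_inj_uniq // => w1 w2 /(scalerI _)/addrI; apply.
by rewrite invr_eq0 pnatr_eq0.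
Qed.

(* The coefficient of [e^((a + b).q)] in [J(u, u)] vanishes: [(a + b)/2] lies beyond [lam]. *)
Lemma coef_eq0 a b : lam < lin hv a -> lam < lin hv b ->
  \sum_(c <- C) (if a + b - c \in C then Jform d c (a + b - c) * F c * F (a + b - c) else 0)
  = 0.
Proof.
move=> a_gt b_gt; have := superpotential (a + b); case: ifP => [abW _|_ sq0].
  have half_ab : 2^-1 *: (a + b) \in halfDW d W.
    by apply/mapP; exists (a + b - dvec R d); rewrite // addrCA subrr addr0.
  have := halfDW_lt (in_conv_mem halfDW_uniq half_ab); rewrite linZ linD.
  have two_inv : (2 : R)^-1 * 2 = 1 by rewrite mulVf // pnatr_eq0.
  nra.
rewrite -[RHS]sq0; apply: eq_bigr => c _.
rewrite -(big_seq_pred1 (fun e => Jform d c e * F c * F e)) //; apply: eq_bigl => e.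
by rewrite eq_sym subr_eq [e + c]addrC.
Qed.

Lemma Jform_eq0 a b : a \in C -> b \in C -> Jform d a b * F a * F b = 0 -> Jform d a b = 0.
Proof.
move=> aC bC /eqP; rewrite !mulf_eq0 (negbTE (F_neq0 aC)) (negbTE (F_neq0 bC)) !orbF.
by move/eqP.
Qed.

Section LexTop.
Variable m1 : 'rV[R]_r.
Hypotheses (m1_max : lex_max (lex_key hv) C m1) (m1_gt : lam < lin hv m1).

Lemma lex_max_null : Jform d m1 m1 = 0.
Proof.
have [m1C m1_top] := m1_max; apply: (Jform_eq0 m1C m1C).
have := coef_eq0 m1_gt m1_gt.
rewrite (big_seq_single (c := m1)) ?addrK ?m1C // => a aC am1.
case: ifP => // bC; exfalso.
have := lex_lt_add_neq (m1_top a aC am1) (lex_max_le m1_max bC).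
by rewrite addrC subrK eqxx.
Qed.

Variable m2 : 'rV[R]_r.
Hypotheses (m2_max : lex_max (lex_key hv) [seq a <- C | a != m1] m2)
  (m2_gt : lam < lin hv m2).

Lemma lex_second_orth : Jform d m1 m2 = 0.
Proof.
have [m1C _] := m1_max; have [m2F m2_top] := m2_max.
move: (m2F); rewrite mem_filter => /andP[m21 m2C].
apply: (Jform_eq0 m1C m2C); have := coef_eq0 m1_gt m2_gt.
rewrite (big_seq_pair (c := m1) (c' := m2)) 1?eq_sym // => [|a aC am1 am2]; last first.
  case: ifP => // bC; exfalso.
  have a_lt : lex_lt (lex_key hv) a m2 by apply: m2_top; rewrite // mem_filter am1.
  have := lex_lt_add_neq a_lt (lex_max_le m1_max bC).
  by rewrite addrC subrK addrC eqxx.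
rewrite addrK [m1 + m2]addrC addrK m1C m2C (JformC d m2) mulrAC.
move/eqP; rewrite -mulr2n mulrn_eq0 /=; exact/eqP.
Qed.

Lemma lex_second_null : Jform d m2 m2 = 0.
Proof.
have [m1C _] := m1_max; have [m2F m2_top] := m2_max.
move: (m2F); rewrite mem_filter => /andP[m21 m2C].
have orth : Jform d m1 (m2 + m2 - m1) = 0.
  by rewrite JformBr JformDr lex_max_null lex_second_orth !addr0 subrr.
apply: (Jform_eq0 m2C m2C); have := coef_eq0 m2_gt m2_gt.
rewrite (big_seq_single (c := m2)) ?addrK ?m2C // => a aC am2.
case: ifP => // bC.
have [->|am1] := eqVneq a m1; first by rewrite orth !mul0r.
have [b_eq|bm1] := eqVneq (m2 + m2 - a) m1.
  have a_eq : a = m2 + m2 - m1 by rewrite -b_eq opprB addrC subrK.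
  by rewrite b_eq JformC a_eq orth !mul0r.
exfalso.
have a_lt : lex_lt (lex_key hv) a m2 by apply: m2_top; rewrite // mem_filter am1.
have b_le : lex_le (lex_key hv) (m2 + m2 - a) m2.
  by apply: lex_max_le m2_max _; rewrite mem_filter bm1.
by have := lex_lt_add_neq a_lt b_le; rewrite addrC subrK eqxx.
Qed.

End LexTop.

Lemma lex_max_unique m1 c :
  lex_max (lex_key hv) C m1 -> c \in C -> lam < lin hv c -> c = m1.
Proof.
move=> m1_max cC c_gt; apply/eqP; apply: contraT => cm1.
have m1_gt : lam < lin hv m1 := lt_le_trans c_gt (lex_max_lin m1_max cC).
have cF : c \in [seq a <- C | a != m1] by rewrite mem_filter cm1.
have [m2 m2_max] : exists m2, lex_max (lex_key hv) [seq a <- C | a != m1] m2.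
  by apply: lex_max_exists; [apply: lex_key_total | case: [seq a <- C | a != m1] cF].
have m2_gt : lam < lin hv m2 := lt_le_trans c_gt (lex_max_lin m2_max cF).
have [m2F _] := m2_max; move: m2F; rewrite mem_filter => /andP[m21 m2C].
have [m1C _] := m1_max.
have := null_orthogonal_eq d_gt0 _ (lex_max_null m1_max m1_gt)
  (lex_second_null m1_max m1_gt m2_max m2_gt) (lex_second_orth m1_max m1_gt m2_max m2_gt).
by rewrite !C_hyperplane // => /(_ erefl) m12; rewrite m12 eqxx in m21.
Qed.

Lemma beyond_lam_unique_null_vertex c : c \in C -> lam < lin hv c ->
  (forall c', c' \in C -> lam < lin hv c' -> c' = c) /\ is_null d c /\ is_vertex C c.
Proof.
move=> cC c_gt.
have [m1 m1_max] : exists m1, lex_max (lex_key hv) C m1.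
  by apply: lex_max_exists; [apply: lex_key_total | case: (C) cC].
have c_eq := lex_max_unique m1_max cC c_gt.
have beyond_eq c' : c' \in C -> lam < lin hv c' -> c' = c.
  by move=> c'C c'_gt; rewrite c_eq; apply: lex_max_unique.
split=> //; split; first by rewrite /is_null c_eq lex_max_null // -c_eq.
apply: (strict_max_is_vertex (hv := hv)) => // a aC ac.
rewrite ltNge; apply: contra ac => a_ge; apply/eqP/beyond_eq => //.
exact: lt_le_trans c_gt a_ge.
Qed.

End Superpotential.

Theorem proposition3p3 (R : realFieldType) (r : nat) (d : 'I_r -> nat)
    (W : seq 'rV[R]_r) (A : 'rV[R]_r -> R)
    (C : seq 'rV[R]_r) (F : 'rV[R]_r -> R) :
  (2 <= r)%N ->
  (forall i, (0 < d i)%N) ->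
  uniq W ->
  (forall w, w \in W ->
     (typeI w /\ 0 < A w) \/ ((typeII w \/ typeIII w) /\ A w < 0)) ->
  conv_dim W r.-1 ->
  uniq C ->
  (forall c, c \in C -> F c != 0) ->
  (forall xi : 'rV[R]_r,
     \sum_(a <- C) \sum_(c <- C | a + c == xi) Jform d a c * F a * F c =
     (if xi - dvec R d \in W then A (xi - dvec R d) else 0)) ->
  (forall c, c \in C -> csum c = ((ndim d)%:R - 1) / 2) ->
  (forall (hv : 'rV[R]_r) (lam : R),
     (forall x, in_conv (halfDW d W) x -> lin hv x < lam) ->
     (forall c1 c2, c1 \in C -> c2 \in C -> lam < lin hv c1 -> lam < lin hv c2 ->
        c1 = c2) /\
     (forall c, c \in C -> lam < lin hv c -> is_null d c /\ is_vertex C c))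
  /\
  (forall c, c \in C -> ~ in_conv (halfDW d W) c -> is_null d c /\ is_vertex C c).
Proof.
move=> _ d_gt0 uniqW _ _ uniqC F_neq0 superpotential C_hyperplane.
have beyond := beyond_lam_unique_null_vertex d_gt0 uniqW uniqC F_neq0 superpotential
  C_hyperplane.
split=> [hv lam halfDW_lt|c cC c_out].
  split=> [c1 c2 c1C c2C c1_gt c2_gt|c cC c_gt].
    by have [uniq_beyond _] := beyond hv lam halfDW_lt c2 c2C c2_gt; apply: uniq_beyond.
  by case: (beyond hv lam halfDW_lt c cC c_gt).
have [hv [lam [halfDW_lt c_gt]]] := separate_from_conv (halfDW_uniq d uniqW) c_out.
by case: (beyond hv lam halfDW_lt c cC c_gt).
Qed.
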